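(* Let $x\in P$ and $u'\in P'$ with $u'\notin x'^{\perp}$ in $S'$. Then $d(x,u')=3$ in the collinearity graph of $\mathbb{S}$.
   Context: Let $S=(P,L)$ and $S'=(P',L')$ be generalized quadrangles of order $(2,2)$ (every line has 3 points, every point lies on 3 lines, and for each point $x$ and line $l\not\ni x$ exactly one point of $l$ is collinear with $x$), with an isomorphism $x\mapsto x'$ from $S$ to $S'$ (write $u$ for the preimage of $u'\in P'$). In a point-line geometry, $x^{\perp}$ is $x$ together with all points collinear with $x$, and $A^{\perp}=\bigcap_{a\in A}a^{\perp}$. A triad is a set of three pairwise non-collinear points, complete if $|T^{\perp}|=3$. Let $\mathcal{P}=\{(x,y')\in P\times P':y'\in x'^{\perp}\}$ and $\mathcal{L}$ the set of all $3$-subsets $\{(x,u'),(y,v'),(z,w')\}$ of $\mathcal{P}$ where $T=\{x,y,z\}$ (three distinct points) is a line or complete triad of $S$ and $\{u',v',w'\}=T'^{\perp}$ in $S'$ with $u',v',w'$ distinct. The geometry $\mathbb{S}=(\mathbb{P},\mathbb{L})$ has point set $\mathbb{P}=\mathcal{P}\cup P\cup P'$ (disjoint union) and line set $\mathcal{L}\cup\{\{x,(x,u'),u'\}:(x,u')\in\mathcal{P}\}$. *)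

From mathcomp Require Import all_boot.
Set Implicit Arguments. Unset Strict Implicit. Unset Printing Implicit Defensive.

Section Geometry.
Variable T : finType.

Definition collinear (L : {set {set T}}) (x y : T) : bool :=
  (x != y) && [exists l in L, (x \in l) && (y \in l)].

Definition perp (L : {set {set T}}) (x : T) : {set T} :=
  [set y | (y == x) || collinear L x y].

Definition perpS (L : {set {set T}}) (A : {set T}) : {set T} :=
  \bigcap_(a in A) perp L a.

Definition is_GQ22 (L : {set {set T}}) : Prop :=
  (forall l, l \in L -> #|l| = 3) /\
  (forall x : T, #|[set l in L | x \in l]| = 3) /\
  (forall (x : T) l, l \in L -> x \notin l ->
     #|[set y in l | collinear L x y]| = 1).

Definition triad (L : {set {set T}}) (A : {set T}) : bool :=
  (#|A| == 3) && [forall x in A, forall y in A, ~~ collinear L x y].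

Definition complete_triad (L : {set {set T}}) (A : {set T}) : bool :=
  triad L A && (#|perpS L A| == 3).

Fixpoint walk (adj : rel T) (n : nat) (a b : T) : Prop :=
  match n with
  | 0 => a = b
  | k.+1 => exists c, adj a c /\ walk adj k c b
  end.

Definition gdist_eq (adj : rel T) (a b : T) (n : nat) : Prop :=
  walk adj n a b /\ (forall k, k < n -> ~ walk adj k a b).

End Geometry.

Section BigS.
Variables (P P' : finType) (L : {set {set P}}) (L' : {set {set P'}}) (f : P -> P').

(* point set of the big geometry: (P + P') + (P * P'); only pairs in calP are used *)
Definition Tpt := ((P + P') + (P * P'))%type.

Definition inP (x : P) : Tpt := inl (inl x).
Definition inP' (u : P') : Tpt := inl (inr u).
Definition inPair (x : P) (u : P') : Tpt := inr (x, u).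

Definition in_calP (x : P) (u : P') : bool := u \in perp L' (f x).

Definition line_or_ctriad (A : {set P}) : bool :=
  (A \in L) || complete_triad L A.

Definition is_calL (B : {set Tpt}) : bool :=
  [exists x : P, exists y : P, exists z : P,
   exists u : P', exists v : P', exists w : P',
   [&& x != y, y != z, x != z, u != v, v != w, u != w,
       in_calP x u, in_calP y v, in_calP z w,
       line_or_ctriad [set x; y; z],
       [set u; v; w] == perpS L' (f @: [set x; y; z]) &
       B == [set inPair x u; inPair y v; inPair z w]]].

Definition is_triv_line (B : {set Tpt}) : bool :=
  [exists x : P, exists u : P',
    in_calP x u && (B == [set inP x; inPair x u; inP' u])].

Definition bigL : {set {set Tpt}} :=
  [set B | is_calL B || is_triv_line B].

End BigS.

From mathcomp Require Import all_boot.

(* In the geometry bigS a point x of P lies only on the trivial lines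
   {x, (x,w'), w'} with w' in x'^perp, since the lines of calL consist of pairs;
   dually for a point u' of P'.  So a walk of length at most 2 from x to u'
   would put u' in x'^perp.  A walk of length 3 is x, w', y, u', where y is the
   preimage of u' and w' is a common neighbour of x' and u' in the generalized
   quadrangle S'. *)

Section Quadrangle.
Context {T : finType} {L : {set {set T}}}.

Lemma collinear_sym x y : collinear L x y = collinear L y x.
Proof.
rewrite /collinear eq_sym; congr (_ && _).
by apply: eq_existsb => l; rewrite [(x \in l) && _]andbC.
Qed.

Lemma perp_of_line {l x y} : l \in L -> x \in l -> y \in l -> y \in perp L x.
Proof.
move=> Ll xl yl; rewrite inE /collinear eq_sym.
by case: eqP => //= _; apply/existsP; exists l; rewrite Ll xl yl.
Qed.

Lemma GQ22_common_perp a b : is_GQ22 L ->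
  exists c, (c \in perp L a) && (c \in perp L b).
Proof.
case=> _ [lines_through one_collinear].
have [b_perp_a | b_notperp_a] := boolP (b \in perp L a).
  by exists b; rewrite b_perp_a inE eqxx.
have /card_gt0P[l] : 0 < #|[set l in L | b \in l]| by rewrite lines_through.
rewrite inE => /andP[Ll bl].
have al : a \notin l.
  by apply: contra b_notperp_a => al; apply: perp_of_line Ll al bl.
have /eqP/cards1P[c Ec] := one_collinear a l Ll al.
have : c \in [set y in l | collinear L a y] by rewrite Ec set11.
rewrite inE => /andP[cl ac].
by exists c; rewrite inE ac orbT (perp_of_line Ll bl cl).
Qed.

End Quadrangle.

Section BigGeometry.
Variables (P P' : finType) (L : {set {set P}}) (L' : {set {set P'}}) (f : P -> P').

Local Notation adj := (collinear (bigL L L' f)).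

Lemma calL_pairs {B t} : is_calL L L' f B -> t \in B -> exists x u, t = inPair x u.
Proof.
move=> /existsP[x /existsP[y /existsP[z /existsP[u /existsP[v /existsP[w]]]]]].
move=> /and4P[_ _ _ /and4P[_ _ _ /and4P[_ _ _ /and3P[_ _ /eqP->]]]].
by rewrite !inE -orbA => /or3P[] /eqP->; do 2 eexists.
Qed.

Lemma bigL_lines_through_inP {a B} : B \in bigL L L' f -> inP P' a \in B ->
  exists2 w, in_calP L' f a w & B = [set inP P' a; inPair a w; inP' P w].
Proof.
rewrite inE => /orP[calB aB | ]; first by have [? [? ]] := calL_pairs calB aB.
move=> /existsP[y /existsP[w /andP[yw /eqP->]]].
by rewrite !inE -orbA => /or3P[/eqP[->]|/eqP|/eqP] //; exists w.
Qed.

Lemma bigL_lines_through_inP' {u B} : B \in bigL L L' f -> inP' P u \in B ->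
  exists2 y, in_calP L' f y u & B = [set inP P' y; inPair y u; inP' P u].
Proof.
rewrite inE => /orP[calB uB | ]; first by have [? [? ]] := calL_pairs calB uB.
move=> /existsP[y /existsP[w /andP[yw /eqP->]]].
by rewrite !inE -orbA => /or3P[/eqP|/eqP|/eqP[->]] //; exists y.
Qed.

Lemma adj_inP {a c} : adj (inP P' a) c ->
  exists2 w, in_calP L' f a w & c = inPair a w \/ c = inP' P w.
Proof.
case/andP=> ac /existsP[B /and3P[LB aB cB]].
have [w aw EB] := bigL_lines_through_inP LB aB.
exists w => //; move: cB ac; rewrite EB !inE -orbA.
by case/or3P=> /eqP->; rewrite ?eqxx //; [left | right].
Qed.

Lemma adj_inP' {u c} : adj (inP' P u) c ->
  exists2 y, in_calP L' f y u & c = inPair y u \/ c = inP P' y.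
Proof.
case/andP=> uc /existsP[B /and3P[LB uB cB]].
have [y yu EB] := bigL_lines_through_inP' LB uB.
exists y => //; move: cB uc; rewrite EB !inE -orbA.
by case/or3P=> /eqP->; rewrite ?eqxx //; [right | left].
Qed.

Lemma adj_inP_inP' a w : in_calP L' f a w -> adj (inP P' a) (inP' P w).
Proof.
move=> aw; apply/andP; split=> //.
apply/existsP; exists [set inP P' a; inPair a w; inP' P w].
rewrite !inE !eqxx !orbT !andbT /=.
apply/orP; right.
by apply/existsP; exists a; apply/existsP; exists w; rewrite aw eqxx.
Qed.

Lemma walk3_inP_inP' x y : is_GQ22 L' -> walk adj 3 (inP P' x) (inP' P (f y)).
Proof.
move=> GQ'; have [c /andP[xc yc]] := GQ22_common_perp (f x) (f y) GQ'.
exists (inP' P c); split; first exact: adj_inP_inP'.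
exists (inP P' y); split; first by rewrite collinear_sym; apply: adj_inP_inP'.
exists (inP' P (f y)); split=> //.
by apply: adj_inP_inP'; rewrite /in_calP inE eqxx.
Qed.

Lemma no_short_walk_inP_inP' x u : u \notin perp L' (f x) ->
  forall k, k < 3 -> ~ walk adj k (inP P' x) (inP' P u).
Proof.
move=> xu [|[|[|k]]] //= _.
- move=> [c [xc Ec]]; subst c; have [w xw [//|[Ew]]] := adj_inP xc.
  by apply: (negP xu); rewrite Ew.
- move=> [c [xc [d [cd Ed]]]]; subst d; rewrite collinear_sym in cd.
  have [w xw Ec] := adj_inP xc; have [y yu Ec'] := adj_inP' cd.
  case: Ec Ec' => [-> [[Ey Ew]|] | -> []] //.
  by apply: (negP xu); rewrite Ey.
Qed.

End BigGeometry.

Theorem lemma4p2 (P P' : finType) (L : {set {set P}}) (L' : {set {set P'}})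
  (f : P -> P') :
  is_GQ22 L -> is_GQ22 L' ->
  bijective f -> L' = [set f @: l | l : {set P} in L] ->
  forall (x : P) (u : P'), u \notin perp L' (f x) ->
  gdist_eq (collinear (bigL L L' f)) (inP P' x) (inP' P u) 3.
Proof.
move=> _ GQ' [g _ gK] _ x u xu; split.
  by rewrite -[u]gK; apply: walk3_inP_inP'.
exact: no_short_walk_inP_inP'.
Qed.
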